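(* Let $\mathcal{Z}\subset[0,1]$ be finite, let $\ell:[0,1]\times\{0,1\}\to\mathbb{R}$ be a proper loss, and let $\sigma:[0,1]\to[0,1]$ be any swap function. Then for every run of the forecasting protocol (predictions $p_t\in\mathcal{Z}$ drawn from $\mathcal{P}_t$, labels $y_t\in\{0,1\}$), $$\mathsf{SReg}^{\ell}_{\sigma}=\sum_{p\in\mathcal{Z}}\Big(\sum_{t=1}^T \mathbb{1}\{p_t=p\}\Big)\big(\mathsf{BREG}_{-\ell}(\rho_p,p)-\mathsf{BREG}_{-\ell}(\rho_p,\sigma(p))\big),$$ $$\mathsf{PSReg}^{\ell}_{\sigma}=\sum_{p\in\mathcal{Z}}\Big(\sum_{t=1}^T \mathcal{P}_t(p)\Big)\big(\mathsf{BREG}_{-\ell}(\tilde\rho_p,p)-\mathsf{BREG}_{-\ell}(\tilde\rho_p,\sigma(p))\big).$$ Furthermore, $$\mathsf{SReg}^{\ell}=\sum_{p\in\mathcal{Z}}\sum_{t=1}^T \mathbb{1}\{p_t=p\}\,\mathsf{BREG}_{-\ell}(\rho_p,p),\qquad \mathsf{PSReg}^{\ell}=\sum_{p\in\mathcal{Z}}\sum_{t=1}^T \mathcal{P}_t(p)\,\mathsf{BREG}_{-\ell}(\tilde\rho_p,p).$$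
   Context: Forecasting protocol: for $t=1,\dots,T$, the forecaster chooses a distribution $\mathcal{P}_t$ over a finite set $\mathcal{Z}\subset[0,1]$ (possibly depending on the past), draws a prediction $p_t\sim\mathcal{P}_t$, and simultaneously the adversary chooses $y_t\in\{0,1\}$, which is then revealed. Define $\rho_p=\frac{\sum_t y_t\mathbb{1}\{p_t=p\}}{\sum_t\mathbb{1}\{p_t=p\}}$ and $\tilde\rho_p=\frac{\sum_t y_t\mathcal{P}_t(p)}{\sum_t\mathcal{P}_t(p)}$, with the convention $0/0=0$. A loss $\ell:[0,1]\times\{0,1\}\to\mathbb{R}$ is proper if $\mathbb{E}_{y\sim \mathrm{Ber}(p)}[\ell(p,y)]\le\mathbb{E}_{y\sim\mathrm{Ber}(p)}[\ell(p',y)]$ for all $p,p'\in[0,1]$. Its univariate form is $\ell(p):=p\,\ell(p,1)+(1-p)\,\ell(p,0)$ (a concave function), and a proper loss satisfies $\ell(p,y)=\ell(p)+g_p(y-p)$ with $g_p:=\ell(p,1)-\ell(p,0)$ a supergradient of the univariate form at $p$. The Bregman divergence of $-\ell$ is $\mathsf{BREG}_{-\ell}(x,y):=\ell(y)-\ell(x)+g_y(x-y)$. For a swap function $\sigma$, $\mathsf{SReg}^\ell_\sigma:=\sum_{t=1}^T\big(\ell(p_t,y_t)-\ell(\sigma(p_t),y_t)\big)$ and $\mathsf{PSReg}^\ell_\sigma:=\sum_{p\in\mathcal{Z}}\sum_{t=1}^T\mathcal{P}_t(p)\big(\ell(p,y_t)-\ell(\sigma(p),y_t)\big)$; swap regret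 $\mathsf{SReg}^\ell:=\sup_{\sigma:[0,1]\to[0,1]}\mathsf{SReg}^\ell_\sigma$ and pseudo swap regret $\mathsf{PSReg}^\ell:=\sup_{\sigma:[0,1]\to[0,1]}\mathsf{PSReg}^\ell_\sigma$. *)

From HB Require Import structures.
From mathcomp Require Import all_boot all_order all_algebra.
From mathcomp Require Import all_classical all_reals.
Set Implicit Arguments. Unset Strict Implicit. Unset Printing Implicit Defensive.
Import Order.TTheory GRing.Theory Num.Theory.
Local Open Scope ring_scope.
Local Open Scope classical_set_scope.

Section Defs.
Variable R : realType.

(* A loss ell : [0,1] x {0,1} -> R; labels are booleans (true = 1, false = 0). *)
Definition loss := R -> bool -> R.

Definition univ (ell : loss) (p : R) : R :=
  p * ell p true + (1 - p) * ell p false.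

Definition gl (ell : loss) (p : R) : R := ell p true - ell p false.

Definition proper_loss (ell : loss) : Prop :=
  forall p p' : R, p \in `[0, 1] -> p' \in `[0, 1] ->
    p * ell p true + (1 - p) * ell p false <=
    p * ell p' true + (1 - p) * ell p' false.

Definition BREG (ell : loss) (x y : R) : R :=
  univ ell y - univ ell x + gl ell y * (x - y).

Definition swap_fun (sigma : R -> R) : Prop :=
  forall x : R, x \in `[0, 1] -> sigma x \in `[0, 1].

Variable T : nat.

(* rho_p, with 0/0 = 0 (MathComp's convention x / 0 = 0) *)
Definition rho (pr : 'I_T -> R) (y : 'I_T -> bool) (q : R) : R :=
  (\sum_(t < T) (y t)%:R * (pr t == q)%:R) / (\sum_(t < T) (pr t == q)%:R).

Definition rhot (P : 'I_T -> R -> R) (y : 'I_T -> bool) (q : R) : R :=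
  (\sum_(t < T) (y t)%:R * P t q) / (\sum_(t < T) P t q).

Definition SReg_sigma (ell : loss) (pr : 'I_T -> R) (y : 'I_T -> bool)
    (sigma : R -> R) : R :=
  \sum_(t < T) (ell (pr t) (y t) - ell (sigma (pr t)) (y t)).

Definition PSReg_sigma (Z : seq R) (ell : loss) (P : 'I_T -> R -> R)
    (y : 'I_T -> bool) (sigma : R -> R) : R :=
  \sum_(q <- Z) \sum_(t < T) P t q * (ell q (y t) - ell (sigma q) (y t)).

Definition SReg (ell : loss) (pr : 'I_T -> R) (y : 'I_T -> bool) : R :=
  sup [set SReg_sigma ell pr y sigma | sigma in swap_fun].

Definition PSReg (Z : seq R) (ell : loss) (P : 'I_T -> R -> R)
    (y : 'I_T -> bool) : R :=
  sup [set PSReg_sigma Z ell P y sigma | sigma in swap_fun].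

End Defs.

From HB Require Import structures.
From mathcomp Require Import all_boot all_order all_algebra.
From mathcomp Require Import all_classical all_reals.
From mathcomp Require Import ring lra.
Set Implicit Arguments. Unset Strict Implicit. Unset Printing Implicit Defensive.
Import Order.TTheory GRing.Theory Num.Theory.
Local Open Scope ring_scope.

(* A proper loss is affine in the label: ell(p, y) = ell(p) + g_p (y - p).
   Hence the loss difference of predicting q instead of s, summed with weights
   w_t, only depends on the labels through the weighted label mean r, and
   equals (sum_t w_t) (BREG(r, q) - BREG(r, s)).  The deterministic regret is
   the pseudo regret of the point masses 1{p_t = q}, whose label means are the
   rho_q.  Properness is exactly nonnegativity of BREG on [0, 1], so the best
   swap sends each q to its label mean, which lies in [0, 1]. *)

Lemma sup_maximum (R : realType) (E : set R) (x : R) :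
  E x -> ubound E x -> sup E = x.
Proof.
move=> Ex ubx; apply/eqP; rewrite eq_le ge_sup //=; last by exists x.
by apply: ub_le_sup => //; exists x.
Qed.

Section Bregman.
Variables (R : realType) (ell : loss R).

Lemma BREG_xx (r : R) : BREG ell r r = 0.
Proof. by rewrite /BREG; ring. Qed.

Lemma BREG_ge0 (r s : R) : proper_loss ell ->
  r \in `[0, 1] -> s \in `[0, 1] -> 0 <= BREG ell r s.
Proof.
move=> ell_proper r01 s01.
have := ell_proper r s; rewrite !mem_setE => /(_ r01 s01).
have -> : BREG ell r s = (r * ell s true + (1 - r) * ell s false) -
    (r * ell r true + (1 - r) * ell r false) by rewrite /BREG /univ /gl; ring.
by rewrite subr_ge0.
Qed.

Lemma weighted_loss_diffE (T : nat) (y : 'I_T -> bool) (w : 'I_T -> R)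
    (r q s : R) :
  \sum_(t < T) (y t)%:R * w t = (\sum_(t < T) w t) * r ->
  \sum_(t < T) w t * (ell q (y t) - ell s (y t)) =
    (\sum_(t < T) w t) * (BREG ell r q - BREG ell r s).
Proof.
move=> labelsE.
pose a := univ ell q - univ ell s - gl ell q * q + gl ell s * s.
pose b := gl ell q - gl ell s.
transitivity (\sum_(t < T) (w t * a + (y t)%:R * w t * b)).
  by apply: eq_bigr => t _; rewrite /a /b /univ /gl; case: (y t) => /=; ring.
by rewrite big_split /= -!big_distrl /= labelsE /a /b /BREG; ring.
Qed.

End Bregman.

Section LabelMean.
Variables (R : realType) (T : nat) (P : 'I_T -> R -> R) (y : 'I_T -> bool).
Variable q : R.
Hypothesis P_ge0 : forall t, 0 <= P t q.

Let labels_ge0 : 0 <= \sum_(t < T) (y t)%:R * P t q.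
Proof. by apply: sumr_ge0 => t _; rewrite mulr_ge0 //; case: (y t). Qed.

Let mass_ge0 : 0 <= \sum_(t < T) P t q.
Proof. exact: sumr_ge0. Qed.

Let labels_le_mass : \sum_(t < T) (y t)%:R * P t q <= \sum_(t < T) P t q.
Proof. by apply: ler_sum => t _; case: (y t); rewrite ?mul1r ?mul0r. Qed.

(* When the mass vanishes so do the labels, which makes up for x / 0 = 0. *)
Lemma rhot_sumE :
  \sum_(t < T) (y t)%:R * P t q = (\sum_(t < T) P t q) * rhot P y q.
Proof.
rewrite /rhot; have [mass0|mass_neq0] := eqVneq (\sum_(t < T) P t q) 0.
  by rewrite mass0 mul0r; move: labels_le_mass labels_ge0; rewrite mass0; lra.
by rewrite mulrC divfK.
Qed.

Lemma rhot_itv : rhot P y q \in `[0, 1].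
Proof.
rewrite /rhot in_itv /= (divr_ge0 labels_ge0 mass_ge0) /=.
have [mass0|mass_gt0] := eqVneq (\sum_(t < T) P t q) 0.
  by rewrite mass0 invr0 mulr0.
by rewrite ler_pdivrMr ?mul1r // lt_neqAle eq_sym mass_gt0 mass_ge0.
Qed.

End LabelMean.

Section Regret.
Variables (R : realType) (Z : seq R) (ell : loss R) (T : nat).
Variable y : 'I_T -> bool.

Lemma PSReg_sigma_BREG (P : 'I_T -> R -> R) (sigma : R -> R) :
  (forall t q, q \in Z -> 0 <= P t q) ->
  PSReg_sigma Z ell P y sigma =
    \sum_(q <- Z) (\sum_(t < T) P t q) *
      (BREG ell (rhot P y q) q - BREG ell (rhot P y q) (sigma q)).
Proof.
move=> P_ge0; apply: eq_big_seq => q qZ.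
by apply/weighted_loss_diffE/rhot_sumE => t; apply: P_ge0.
Qed.

Lemma PSReg_BREG (P : 'I_T -> R -> R) :
  (forall q, q \in Z -> q \in `[0, 1]) -> proper_loss ell ->
  (forall t q, q \in Z -> 0 <= P t q) ->
  PSReg Z ell P y = \sum_(q <- Z) \sum_(t < T) P t q * BREG ell (rhot P y q) q.
Proof.
move=> Z01 ell_proper P_ge0.
pose best x := if x \in Z then rhot P y x else x.
have best_swap : swap_fun best.
  move=> x; rewrite /best; case: ifP => // xZ _.
  by rewrite mem_setE; apply: rhot_itv => t; apply: P_ge0.
apply: sup_maximum.
  exists best => //; rewrite PSReg_sigma_BREG //; apply: eq_big_seq => q qZ.
  by rewrite /best qZ BREG_xx subr0 big_distrl.
move=> _ [sigma sigma_swap <-]; rewrite PSReg_sigma_BREG // !big_seq.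
apply: ler_sum => q qZ; rewrite -big_distrl /=.
have mass_ge0 : 0 <= \sum_(t < T) P t q by apply: sumr_ge0 => t _; apply: P_ge0.
rewrite ler_wpM2l // gerBl BREG_ge0 //; first by apply: rhot_itv => t; apply: P_ge0.
by have := sigma_swap q; rewrite !mem_setE; apply; apply: Z01.
Qed.

Variable pr : 'I_T -> R.
Hypotheses (Z_uniq : uniq Z) (prZ : forall t, pr t \in Z).

Lemma SReg_sigma_point_mass (sigma : R -> R) :
  SReg_sigma ell pr y sigma =
    PSReg_sigma Z ell (fun t q => (pr t == q)%:R) y sigma.
Proof.
rewrite /PSReg_sigma exchange_big /=; apply: eq_bigr => t _.
rewrite (bigD1_seq (pr t)) //= eqxx mul1r big1 ?addr0 // => q.
by rewrite eq_sym => /negbTE ->; rewrite mul0r.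
Qed.

Lemma SReg_point_mass :
  SReg ell pr y = PSReg Z ell (fun t q => (pr t == q)%:R) y.
Proof.
by congr sup; apply: eq_imagel => sigma _; apply: SReg_sigma_point_mass.
Qed.

End Regret.

Theorem proposition1 (R : realType) (Z : seq R) (ell : loss R)
    (T : nat) (P : 'I_T -> R -> R) (pr : 'I_T -> R) (y : 'I_T -> bool)
    (sigma : R -> R) :
  uniq Z ->
  (forall q, q \in Z -> q \in `[0, 1]) ->
  proper_loss ell ->
  swap_fun sigma ->
  (forall t q, q \in Z -> 0 <= P t q) ->
  (forall t, \sum_(q <- Z) P t q = 1) ->
  (forall t, pr t \in Z) ->
  (forall t, 0 < P t (pr t)) ->
  [/\ SReg_sigma ell pr y sigma =
        \sum_(q <- Z) (\sum_(t < T) (pr t == q)%:R) *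
          (BREG ell (rho pr y q) q - BREG ell (rho pr y q) (sigma q)),
      PSReg_sigma Z ell P y sigma =
        \sum_(q <- Z) (\sum_(t < T) P t q) *
          (BREG ell (rhot P y q) q - BREG ell (rhot P y q) (sigma q)),
      SReg ell pr y =
        \sum_(q <- Z) \sum_(t < T) (pr t == q)%:R * BREG ell (rho pr y q) q
    & PSReg Z ell P y =
        \sum_(q <- Z) \sum_(t < T) P t q * BREG ell (rhot P y q) q].
Proof.
move=> Z_uniq Z01 ell_proper _ P_ge0 _ prZ _.
have mass_ge0 t q : q \in Z -> 0 <= ((pr t == q)%:R : R) by case: (_ == _).
split.
- rewrite (SReg_sigma_point_mass ell y Z_uniq prZ).
  exact: (PSReg_sigma_BREG ell y sigma mass_ge0).
- exact: PSReg_sigma_BREG.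
- rewrite (SReg_point_mass ell y Z_uniq prZ).
  exact: (PSReg_BREG y Z01 ell_proper mass_ge0).
- exact: PSReg_BREG.
Qed.
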